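(* Let $V$ be a vertex operator algebra that is strongly generated by a single homogeneous element $u\in V$, i.e. $V$ is spanned by the vectors $u_{-k_1}u_{-k_2}\cdots u_{-k_r}\mathbf{1}$ with $r\in\mathbb{N}$ and $k_1,\dots,k_r\in\mathbb{Z}_+$. Let $n\in\mathbb{Z}_+$ and suppose that either (i) $1\le \mathrm{wt}\,u\le n$, or (ii) $\mathrm{wt}\,u=0$ and $u_{-2}\mathbf{1}\neq 0$. Then $O^L(V)\not\subset O_n^\circ(V)$.
   Context: $V$ has vacuum $\mathbf{1}$, vertex operator $Y(v,x)=\sum_{k\in\mathbb{Z}}v_kx^{-k-1}$, Virasoro operators $L(m)$, and $\mathrm{wt}\,v$ is the $L(0)$-eigenvalue of a homogeneous $v$. For $n\in\mathbb{N}$, homogeneous $a\in V$ and $b\in V$, $a\circ_n b=\mathrm{Res}_x\,(1+x)^{\mathrm{wt}\,a+n}Y(a,x)b\,x^{-2n-2}$ (extended linearly in $a$). $O_n^\circ(V)=\mathrm{span}\{a\circ_n b:a,b\in V\}$ and $O^L(V)=\{(L(-1)+L(0))v: v\in V\}$. *)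

From HB Require Import structures.
From mathcomp Require Import all_boot all_order all_algebra complex.
From mathcomp Require Import Rstruct.
Set Implicit Arguments. Unset Strict Implicit. Unset Printing Implicit Defensive.
Import Order.TTheory GRing.Theory Num.Theory.
Local Open Scope ring_scope.

Definition C : fieldType := (Rdefinitions.R)[i].

Section VOA.
Variable V : lmodType C.

Definition binomz (r : int) (i : nat) : C :=
  (\prod_(j < i) (r%:~R - j%:R)) / (i`!)%:R.

(* Y : V -> int -> V -> V,  Y u k v = u_k v  (Y(u,x) = sum_k u_k x^{-k-1}). *)
Variable Y : V -> int -> V -> V.

Definition Lop (omega : V) (m : int) : V -> V := Y omega (m + 1).

Definition in_span (S : V -> Prop) (v : V) : Prop :=
  exists s : seq (C * V), (forall p, p \in s -> S p.2) /\
    v = \sum_(p <- s) p.1 *: p.2.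

(* The axioms of a vertex operator algebra (V, Y, 1, omega) of central charge c
   (Frenkel–Lepowsky–Meurman / Lepowsky–Li), with the Jacobi identity written
   in its equivalent component (Borcherds) form. *)
Record is_VOA (vac omega : V) (c : C) : Prop := {
  Y_linl : forall (a : C) (u u' : V) (k : int) (w : V),
      Y (a *: u + u') k w = a *: Y u k w + Y u' k w;
  Y_linr : forall (u : V) (k : int) (a : C) (w w' : V),
      Y u k (a *: w + w') = a *: Y u k w + Y u k w';
  Y_trunc : forall u v : V, exists N : int, forall k : int, N <= k -> Y u k v = 0;
  Y_vac : forall (k : int) (v : V), Y vac k v = (if k == -1 then v else 0);
  Y_creation : forall u : V, Y u (-1) vac = u /\ (forall k : int, 0 <= k -> Y u k vac = 0);
  Y_jacobi : forall (u v w : V) (m n l : int) (M : nat),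
      (forall i : nat, (M <= i)%N ->
          [/\ Y u (l + i%:Z) v = 0, Y v (n + i%:Z) w = 0 & Y u (m + i%:Z) w = 0]) ->
      \sum_(i < M) binomz m i *: Y (Y u (l + i%:Z) v) (m + n - i%:Z) w =
      \sum_(i < M) ((-1) ^+ i * binomz l i) *:
          (Y u (m + l - i%:Z) (Y v (n + i%:Z) w)
           - (-1) ^ l *: Y v (n + l - i%:Z) (Y u (m + i%:Z) w));
  Y_virasoro : forall (m n : int) (v : V),
      Lop omega m (Lop omega n v) - Lop omega n (Lop omega m v) =
      (m - n)%:~R *: Lop omega (m + n) v
      + ((m ^+ 3 - m)%:~R / 12%:R * (if m + n == 0 then 1 else 0) * c) *: v;
  Y_deriv : forall (v : V) (k : int) (w : V),
      Y (Lop omega (-1) v) k w = - (k%:~R) *: Y v (k - 1) w;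
  Y_grading : forall v : V, exists s : seq (int * V),
      (forall p, p \in s -> Lop omega 0 p.2 = p.1%:~R *: p.2) /\
      v = \sum_(p <- s) p.2;
  Y_findim : forall n : int, exists s : seq V,
      forall v : V, Lop omega 0 v = n%:~R *: v -> in_span (fun x => x \in s) v;
  Y_lowbound : exists N : int, forall (n : int) (v : V),
      n < N -> Lop omega 0 v = n%:~R *: v -> v = 0
}.

Definition homogeneous (omega : V) (v : V) (w : int) : Prop :=
  Lop omega 0 v = w%:~R *: v.

(* a o_n b = Res_x (1+x)^{wt a + n} Y(a,x) b x^{-2n-2}
           = sum_{i >= 0} binom(wt a + n, i) a_{i-2n-2} b,
   for homogeneous a of weight wa; the sum is finite, M being any bound
   beyond which a_{i-2n-2} b vanishes. *)
Definition circ_n (n : nat) (a : V) (wa : int) (b : V) (M : nat) : V :=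
  \sum_(i < M) binomz (wa + n%:Z) i *: Y a (i%:Z - 2 * n%:Z - 2) b.

(* The set of all a o_n b (a homogeneous, b arbitrary); by linearity of o_n in
   a, its span is O_n^o(V) = span{ a o_n b : a, b in V }. *)
Definition circ_set (omega : V) (n : nat) (x : V) : Prop :=
  exists (a : V) (wa : int) (b : V) (M : nat),
    homogeneous omega a wa /\
    (forall i : nat, (M <= i)%N -> Y a (i%:Z - 2 * n%:Z - 2) b = 0) /\
    x = circ_n n a wa b M.

Definition On_circ (omega : V) (n : nat) : V -> Prop := in_span (circ_set omega n).

Definition OL (omega : V) (x : V) : Prop :=
  exists v : V, x = Lop omega (-1) v + Lop omega 0 v.

(* Monomial u_{-k_1} u_{-k_2} ... u_{-k_r} 1 with k_j = ks_j + 1 (k_j in Z_+). *)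
Definition monomial (vac u : V) (ks : seq nat) : V :=
  foldr (fun k w => Y u (- (k.+1)%:Z) w) vac ks.

Definition strongly_generated_by (vac u : V) : Prop :=
  forall v : V, in_span (fun x => exists ks, x = monomial vac u ks) v.

End VOA.

(* The weights of V are nonnegative, since V is spanned by monomials in u.
   Hence, for homogeneous a and b, a o_n b is a combination of the vectors
   a_(i-2n-2) b with i <= wt a + n (larger i are killed by the binomial
   coefficient), of weight wt a + wt b + 2n + 1 - i >= n + 1: O_n^o(V) lies in
   the sum of the weight spaces V_k, k > n.  But (L(-1) + L(0)) u =
   u_(-2) 1 + (wt u) u has the nonzero component (wt u) u of weight wt u <= n in
   case (i), and is the nonzero vector u_(-2) 1 of weight 1 <= n in case (ii). *)

From HB Require Import structures.
From mathcomp Require Import all_boot all_order all_algebra complex zify Rstruct.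
Import Order.TTheory GRing.Theory Num.Theory.
Local Open Scope ring_scope.
Set Implicit Arguments. Unset Strict Implicit.

(* C is exported only as a fieldType, so intr_eq0 has to be taken at R[i]. *)
Lemma intrC_eq0 (z : int) : ((z%:~R : C) == 0) = (z == 0).
Proof. exact: (@intr_eq0 (Rdefinitions.R)[i] z). Qed.

Lemma binomz_small (r : int) (i : nat) : 0 <= r -> r < i%:Z -> binomz r i = 0.
Proof.
case: r => // N _ ltNi; have ltNi' : (N < i)%N by lia.
by rewrite /binomz (bigD1 (Ordinal ltNi')) //= subrr !mul0r.
Qed.

Lemma binomz0 (r : int) : binomz r 0 = 1.
Proof. by rewrite /binomz big_ord0 divr1. Qed.

Lemma binomz11 : binomz 1 1 = 1.
Proof. by rewrite /binomz big_ord1 subr0 divr1. Qed.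

Section VOA.
Variables (V : lmodType C) (Y : V -> int -> V -> V) (vac omega : V) (c : C).
Hypothesis HV : is_VOA Y vac omega c.

Local Notation L0 := (Lop Y omega 0).
Local Notation homogeneous := (homogeneous Y omega).

Lemma Yl0 k w : Y 0 k w = 0.
Proof.
have := Y_linl HV 1 0 0 k w; rewrite !scale1r addr0 => h.
by apply: (addrI (Y 0 k w)); rewrite addr0 -h.
Qed.

Lemma YlZ a v k w : Y (a *: v) k w = a *: Y v k w.
Proof. by rewrite -[a *: v]addr0 (Y_linl HV) Yl0 addr0. Qed.

Lemma Yr0 v k : Y v k 0 = 0.
Proof.
have := Y_linr HV v k 1 0 0; rewrite !scale1r addr0 => h.
by apply: (addrI (Y v k 0)); rewrite addr0 -h.
Qed.

Lemma YrD v k w w' : Y v k (w + w') = Y v k w + Y v k w'.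
Proof. by rewrite -[w]scale1r (Y_linr HV) !scale1r. Qed.

Lemma YrZ v k a w : Y v k (a *: w) = a *: Y v k w.
Proof. by rewrite -[a *: w]addr0 (Y_linr HV) Yr0 addr0. Qed.

Lemma YrN v k w : Y v k (- w) = - Y v k w.
Proof. by rewrite -scaleN1r YrZ scaleN1r. Qed.

Lemma Yr_sum v k (I : Type) (r : seq I) (F : I -> V) :
  Y v k (\sum_(i <- r) F i) = \sum_(i <- r) Y v k (F i).
Proof.
elim: r => [|x r IH]; first by rewrite !big_nil Yr0.
by rewrite !big_cons YrD IH.
Qed.

Lemma L0D v w : L0 (v + w) = L0 v + L0 w. Proof. exact: YrD. Qed.
Lemma L0Z a v : L0 (a *: v) = a *: L0 v. Proof. exact: YrZ. Qed.
Lemma L0N v : L0 (- v) = - L0 v. Proof. exact: YrN. Qed.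

Lemma Y_trunc_nat v w k :
  exists N : nat, forall i : nat, (N <= i)%N -> Y v (k + i%:Z) w = 0.
Proof.
have [N0 hN0] := Y_trunc HV v w.
by exists `|N0 - k|%N => i hi; apply: hN0; lia.
Qed.

Lemma vac_homogeneous : homogeneous vac 0.
Proof. by rewrite /homogeneous scale0r; apply: (proj2 (Y_creation HV omega)). Qed.

Lemma Lm1_vac v : Lop Y omega (-1) v = Y v (-2) vac.
Proof.
by rewrite -[LHS](proj1 (Y_creation HV _)) (Y_deriv HV) opprK scale1r.
Qed.

(* Jacobi identity for omega, a, b with m = 1, l = 0, where
   (L(-1) a)_(j+1) = -(j+1) a_j. *)
Lemma L0_Y_comm a wa j b : homogeneous a wa ->
  L0 (Y a j b) = Y a j (L0 b) + (wa - j - 1)%:~R *: Y a j b.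
Proof.
move=> Ha.
have [N1 h1] := Y_trunc_nat omega a 0.
have [N2 h2] := Y_trunc_nat a b j.
have [N3 h3] := Y_trunc_nat omega b 1.
pose N := maxn N1 (maxn N2 N3).
have trunc : forall i : nat, (N.+2 <= i)%N ->
    [/\ Y omega (0 + i%:Z) a = 0, Y a (j + i%:Z) b = 0 & Y omega (1 + i%:Z) b = 0].
  by move=> i le_i; split; [apply: h1 | apply: h2 | apply: h3]; lia.
have := Y_jacobi HV (m := 1) trunc.
rewrite !big_ord_recl !big1 => [|i _|i _]; rewrite ?lift0; last 2 first.
- by rewrite binomz_small ?mulr0 ?scale0r //; lia.
- by rewrite binomz_small ?scale0r //; lia.
rewrite !binomz0 binomz11 (binomz_small (r := 0) (i := 1)) //.
rewrite expr0 expr0z mul1r mulr0 !scale1r scale0r !addr0.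
rewrite (_ : 1 + j - (ord0 : 'I_N.+1).+1%:Z = j); last by rewrite [1 + j]addrC addrK.
move=> J; have : Y (Lop Y omega (-1) a) (1 + j) b + Y (L0 a) j b =
    L0 (Y a j b) - Y a j (L0 b) := J.
rewrite (Y_deriv HV) Ha YlZ [1 + j]addrC addrK => {}J.
rewrite -[L0 _](subrK (Y a j (L0 b))) -J addrC -scalerDl [RHS]addrC.
by congr (_ *: _ + _); rewrite -intrN -intrD; congr (_%:~R); lia.
Qed.

Lemma Y_homogeneous a wa b q j : homogeneous a wa -> homogeneous b q ->
  homogeneous (Y a j b) (wa + q - j - 1).
Proof.
move=> Ha Hb; rewrite /homogeneous (L0_Y_comm _ _ Ha) Hb YrZ -scalerDl -intrD.
by congr (_%:~R *: _); lia.
Qed.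

Lemma homogeneousZ a v q : homogeneous v q -> homogeneous (a *: v) q.
Proof. by rewrite /homogeneous L0Z => ->; rewrite !scalerA mulrC. Qed.

Definition L0_poly (K : seq int) (v : V) : V :=
  foldr (fun k w => L0 w - k%:~R *: w) v K.

Lemma L0_polyD K v w : L0_poly K (v + w) = L0_poly K v + L0_poly K w.
Proof. by elim: K => //= k K ->; rewrite L0D scalerDr opprD addrACA. Qed.

Lemma L0_polyZ K a v : L0_poly K (a *: v) = a *: L0_poly K v.
Proof. by elim: K => //= k K ->; rewrite L0Z scalerBr !scalerA mulrC. Qed.

Lemma L0_polyN K v : L0_poly K (- v) = - L0_poly K v.
Proof. by rewrite -scaleN1r L0_polyZ scaleN1r. Qed.

Lemma L0_poly0 K : L0_poly K 0 = 0.
Proof. by have := L0_polyZ K 0 0; rewrite !scale0r. Qed.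

Lemma L0_poly_L0 K v : L0_poly K (L0 v) = L0 (L0_poly K v).
Proof. by elim: K => //= k K ->; rewrite L0D L0N L0Z. Qed.

Lemma L0_polyC K1 K2 v : L0_poly K1 (L0_poly K2 v) = L0_poly K2 (L0_poly K1 v).
Proof. by elim: K1 => //= k K ->; rewrite L0_polyD L0_polyN L0_polyZ L0_poly_L0. Qed.

Lemma L0_poly_cat K1 K2 v : L0_poly (K1 ++ K2) v = L0_poly K1 (L0_poly K2 v).
Proof. exact: foldr_cat. Qed.

Lemma L0_poly_homogeneous K v q : homogeneous v q ->
  L0_poly K v = (\prod_(k <- K) (q - k)%:~R) *: v.
Proof.
move=> Hv; elim: K => [|k K IH] /=; first by rewrite big_nil scale1r.
by rewrite IH big_cons L0Z Hv !scalerA -scalerBl intrB mulrBl [_ * _%:~R]mulrC.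
Qed.

(* v is killed by prod_(k in K) (L(0) - k) for a list K of weights in P; as V is
   graded, this says that v lies in the sum of the weight spaces V_k, k in P. *)
Definition weights_in (P : int -> Prop) (v : V) : Prop :=
  exists2 K : seq int, {in K, forall k, P k} & L0_poly K v = 0.

Section WeightsIn.
Variable P : int -> Prop.

Lemma weights_in0 : weights_in P 0.
Proof. by exists [::]. Qed.

Lemma weights_inD v w : weights_in P v -> weights_in P w -> weights_in P (v + w).
Proof.
move=> [K1 PK1 K1v] [K2 PK2 K2w]; exists (K1 ++ K2).
  by move=> k; rewrite mem_cat => /orP [/PK1|/PK2].
by rewrite L0_poly_cat !L0_polyD K2w L0_polyC K1v !L0_poly0 addr0.
Qed.

Lemma weights_inZ a v : weights_in P v -> weights_in P (a *: v).
Proof. by move=> [K PK Kv]; exists K; rewrite // L0_polyZ Kv scaler0. Qed.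

Lemma weights_in_sum (I : eqType) (r : seq I) (F : I -> V) :
  {in r, forall i, weights_in P (F i)} -> weights_in P (\sum_(i <- r) F i).
Proof.
elim: r => [|i r IH] PF; first by rewrite big_nil; apply: weights_in0.
rewrite big_cons; apply: weights_inD; first by apply: PF; rewrite mem_head.
by apply: IH => j rj; apply: PF; rewrite in_cons rj orbT.
Qed.

Lemma weights_in_span (S : V -> Prop) v :
  (forall x, S x -> weights_in P x) -> in_span S v -> weights_in P v.
Proof.
move=> PS [s [Ss ->]]; apply: weights_in_sum => p sp.
by apply/weights_inZ/PS/Ss.
Qed.

Lemma homogeneous_weights_in v q : homogeneous v q -> P q -> weights_in P v.
Proof. by move=> Hv Pq; exists [:: q]; [move=> k /[!inE] /eqP -> | rewrite /= Hv subrr]. Qed.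

Lemma weights_in_homogeneous_eq0 v q :
  weights_in P v -> homogeneous v q -> ~ P q -> v = 0.
Proof.
move=> [K PK Kv] Hv Pq; apply/eqP; move: Kv; rewrite (L0_poly_homogeneous _ Hv).
move/eqP; rewrite scaler_eq0 => /orP [|//]; rewrite prodf_seq_eq0 => /hasP [k Kk].
by rewrite intrC_eq0 subr_eq0 => /eqP qk; case: Pq; rewrite qk; apply: PK.
Qed.

End WeightsIn.

Lemma weights_in_sub (P Q : int -> Prop) v :
  (forall k, P k -> Q k) -> weights_in P v -> weights_in Q v.
Proof. by move=> PQ [K PK Kv]; exists K => // k /PK /PQ. Qed.

Section StronglyGenerated.
Variables (u : V) (wu : int).
Hypotheses (Hu : homogeneous u wu) (wu_ge0 : 0 <= wu).
Hypothesis Hgen : strongly_generated_by Y vac u.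

Lemma monomial_homogeneous ks :
  exists2 q, 0 <= q & homogeneous (monomial Y vac u ks) q.
Proof.
elim: ks => [|k ks [q q_ge0 Hq]]; first by exists 0; last exact: vac_homogeneous.
by exists (wu + q - (- (k.+1)%:Z) - 1); [lia | apply: Y_homogeneous].
Qed.

Lemma weights_in_ge0 v : weights_in (fun k => 0 <= k) v.
Proof.
apply: weights_in_span (Hgen v) => _ [ks ->].
have [q q_ge0 Hq] := monomial_homogeneous ks.
exact: homogeneous_weights_in Hq _.
Qed.

Lemma homogeneous_ge0 v q : homogeneous v q -> v != 0 -> 0 <= q.
Proof.
move=> Hv /eqP v_neq0; rewrite leNgt; apply/negP => q_lt0; apply: v_neq0.
by apply: (weights_in_homogeneous_eq0 (weights_in_ge0 v) Hv); lia.
Qed.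

Lemma circ_term_weights (n : nat) a wa b q (i : nat) :
  homogeneous a wa -> homogeneous b q ->
  weights_in (fun k => n.+1%:Z <= k)
    (binomz (wa + n%:Z) i *: Y a (i%:Z - 2 * n%:Z - 2) b).
Proof.
move=> Ha Hb.
have [->|a_neq0] := eqVneq a 0; first by rewrite Yl0 scaler0; apply: weights_in0.
have [->|b_neq0] := eqVneq b 0; first by rewrite Yr0 scaler0; apply: weights_in0.
have wa_ge0 := homogeneous_ge0 Ha a_neq0; have q_ge0 := homogeneous_ge0 Hb b_neq0.
have [i_le|i_gt] := leP i%:Z (wa + n%:Z).
  by apply: homogeneous_weights_in (homogeneousZ _ (Y_homogeneous _ Ha Hb)) _; lia.
by rewrite binomz_small ?scale0r; [apply: weights_in0 | lia | lia].
Qed.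

Lemma On_circ_weights (n : nat) x :
  On_circ Y omega n x -> weights_in (fun k => n.+1%:Z <= k) x.
Proof.
apply: weights_in_span => _ [a [wa [b [M [Ha [_ ->]]]]]].
have [s [Hs ->]] := Y_grading HV b.
apply: weights_in_sum => i _; rewrite Yr_sum scaler_sumr.
by apply: weights_in_sum => p sp; apply: circ_term_weights Ha (Hs p sp).
Qed.

End StronglyGenerated.
End VOA.

Theorem theorem4p1 (V : lmodType C) (Y : V -> int -> V -> V)
    (vac omega : V) (c : C) (HV : is_VOA Y vac omega c)
    (u : V) (wu : int) (Hu0 : u != 0) (Hu : homogeneous Y omega u wu)
    (Hgen : strongly_generated_by Y vac u)
    (n : nat) (Hn : (0 < n)%N)
    (Hcase : (1 <= wu /\ wu <= n%:Z) \/ (wu = 0 /\ Y u (-2) vac != 0)) :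
  ~ (forall x : V, OL Y omega x -> On_circ Y omega n x).
Proof.
move=> OL_sub_On.
have wu_ge0 : 0 <= wu by case: Hcase => [[]|[-> _]]; lia.
have Hy : homogeneous Y omega (Y u (-2) vac) (wu + 1).
  by have := Y_homogeneous HV (-2) Hu (vac_homogeneous HV); rewrite addr0 -addrA.
have := On_circ_weights HV Hu wu_ge0 Hgen (OL_sub_On _ (ex_intro _ u erefl)).
rewrite (Lm1_vac HV) Hu => Hx.
case: Hcase => [[wu_ge1 wu_le_n]|[wu0 y_neq0]].
- have Hz : weights_in Y omega (fun k => wu < k) (wu%:~R *: u).
    rewrite -[_ *: u](addKr (Y u (-2) vac)) -scaleN1r.
    apply: (weights_inD HV); last by apply: weights_in_sub Hx; lia.
    by apply: (weights_inZ HV); apply: (homogeneous_weights_in Hy); lia.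
  have : wu%:~R *: u = 0.
    by apply: (weights_in_homogeneous_eq0 HV Hz (homogeneousZ HV _ Hu)); lia.
  by move/eqP; rewrite scaler_eq0 intrC_eq0 (negbTE Hu0) orbF; lia.
- move: Hx Hy; rewrite wu0 scale0r addr0 => Hx Hy.
  by move/eqP: y_neq0; apply; apply: (weights_in_homogeneous_eq0 HV Hx Hy); lia.
Qed.
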